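(* Let $\mathbb{F}_q$ be a finite field, $\mathcal{C}\subseteq\mathbb{F}_q^n$ a linear $[n,k]$ code with dual code $\mathcal{C}^\perp$, and $\mathbb{P}$ a poset on $[n]=\{1,\dots,n\}$ with dual poset $\widetilde{\mathbb{P}}$. Let $A=\{d_r^{\mathbb{P}}(\mathcal{C}):1\le r\le k\}$ and $B=\{n+1-d_s^{\widetilde{\mathbb{P}}}(\mathcal{C}^\perp):1\le s\le n-k\}$. Then $A$ and $B$ are disjoint and $[n]=A\cup B$.
   Context: The dual poset $\widetilde{\mathbb{P}}$ has $i\le_{\widetilde{\mathbb{P}}}j$ iff $j\le_{\mathbb{P}}i$. For $J\subseteq[n]$, $\langle J\rangle_{\mathbb{P}}=\{i:i\le_{\mathbb{P}}j\text{ for some }j\in J\}$, and similarly for $\widetilde{\mathbb{P}}$. For $u\in\mathbb{F}_q^n$, $\mathrm{supp}(u)=\{i:u_i\ne0\}$; for $D\subseteq\mathbb{F}_q^n$, $\mathrm{supp}(D)=\bigcup_{u\in D}\mathrm{supp}(u)$ and $w_{\mathbb{P}}(D)=|\langle\mathrm{supp}(D)\rangle_{\mathbb{P}}|$. The $r$-th generalized minimum $\mathbb{P}$-weight is $d_r^{\mathbb{P}}(\mathcal{C})=\min\{w_{\mathbb{P}}(D): D \text{ an } r\text{-dimensional subspace of }\mathcal{C}\}$, and $d_s^{\widetilde{\mathbb{P}}}(\mathcal{C}^\perp)=\min\{w_{\widetilde{\mathbb{P}}}(D): D \text{ an } s\text{-dimensional subspace of }\mathcal{C}^\perp\}$. 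*)

From HB Require Import structures.
From mathcomp Require Import all_boot all_order all_algebra.
Set Implicit Arguments. Unset Strict Implicit. Unset Printing Implicit Defensive.
Import GRing.Theory.
Local Open Scope ring_scope.

(* A poset on [n] = 'I_n (index i : 'I_n stands for coordinate i+1). *)
Definition is_poset n (le : rel 'I_n) : Prop :=
  [/\ reflexive le, antisymmetric le & transitive le].

Definition dual_rel n (le : rel 'I_n) : rel 'I_n := fun i j => le j i.

Definition ideal n (le : rel 'I_n) (J : {set 'I_n}) : {set 'I_n} :=
  [set i | [exists j in J, le i j]].

(* support of a subspace D (the row space of the matrix D) of F_q^n:
   union of the supports of all vectors u in D *)
Definition supp (F : finFieldType) n (D : 'M[F]_n) : {set 'I_n} :=
  [set i | [exists u : 'rV[F]_n, (u <= D)%MS && (u 0 i != 0)]].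

Definition pweight (F : finFieldType) n (le : rel 'I_n) (D : 'M[F]_n) : nat :=
  #|ideal le (supp D)|.

(* r-th generalized minimum P-weight of the code C (row space of C):
   minimum of w_P(D) over r-dimensional subspaces D of C.
   (Default value n is only used when no such D exists, i.e. never for 1 <= r <= dim C.) *)
Definition gen_weight (F : finFieldType) n (le : rel 'I_n) (C : 'M[F]_n) (r : nat) : nat :=
  \big[minn/n]_(D : 'M[F]_n | (D <= C)%MS && (\rank D == r)) pweight le D.

Definition dual_code (F : finFieldType) n (C : 'M[F]_n) : 'M[F]_n := kermx C^T.

From HB Require Import structures.
From mathcomp Require Import all_boot all_order all_algebra.
From mathcomp Require Import zify.
Set Implicit Arguments. Unset Strict Implicit. Unset Printing Implicit Defensive.
Import Order.TTheory GRing.Theory.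

(* Write C_I for the subcode of C supported in I.  The r-th generalized
   weight d_r(C) is the least |I| over P-downsets I with dim C_I >= r;
   deleting a maximal element of an optimal I loses at most one dimension,
   so r |-> d_r(C) is strictly increasing and A, B consist of k and n - k
   elements of [n].  Complements of P-downsets are dual downsets, and
   (C + F^S)^perp = C^perp :&: F^(~S) gives
     dim C^perp_(~S) + k = |~S| + dim C_S.
   If d_r(C) + d_s(C^perp) = n + 1, take optimal downsets I for C and J for
   C^perp: the complements of I and J are too small to carry s, resp. r,
   dimensions, and the identity at S = I and at S = ~J yields
   s + k >= |J| + r and s + k <= |J| + r - 1.  So A and B are disjoint, and
   by counting they cover [n]. *)

Section CoordinateSubspaces.
Variables (F : fieldType) (n : nat).
Implicit Types S : {set 'I_n}.
Local Open Scope ring_scope.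

Definition coordmx S : 'M[F]_n := diag_mx (\row_i (i \in S)%:R).

Lemma sub_coordmxP m (A : 'M[F]_(m, n)) S :
  reflect (forall i j, j \notin S -> A i j = 0) (A <= coordmx S)%MS.
Proof.
apply: (iffP idP) => [/submxP[B ->] i j jS | A0].
  by rewrite mul_mx_diag !mxE (negPf jS) mulr0.
apply/submxP; exists A; apply/matrixP => i j; rewrite mul_mx_diag !mxE.
by case: (boolP (j \in S)) => jS; rewrite ?mulr1 // A0 ?mul0r.
Qed.

Lemma sub_coordmxC m (A : 'M[F]_(m, n)) S :
  (A <= coordmx (~: S))%MS = (A *m coordmx S == 0).
Proof.
apply/sub_coordmxP/eqP => [A0 | AS0 i j].
  apply/matrixP => i j; rewrite mul_mx_diag !mxE.
  by case: (boolP (j \in S)) => jS; rewrite ?mulr0 // mulr1 A0 // inE jS.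
rewrite inE negbK => jS; move/matrixP: AS0 => /(_ i j).
by rewrite mul_mx_diag !mxE jS mulr1.
Qed.

Lemma coordmxS S1 S2 : S1 \subset S2 -> (coordmx S1 <= coordmx S2)%MS.
Proof.
move=> /subsetP S12; apply/sub_coordmxP => i j jS2; rewrite !mxE.
case: eqP => [->|]; last by rewrite mulr0n.
by rewrite (negPf (contraNN (S12 j) jS2)) mulr1n.
Qed.

Lemma coordmx_sum_delta S :
  (coordmx S :=: \sum_(i in S) <<delta_mx 0 i : 'rV[F]_n>>)%MS.
Proof.
apply/eqmxP/andP; split.
  apply/row_subP => i; rewrite row_diag_mx mxE.
  have [iS|iNS] := boolP (i \in S); last by rewrite scale0r sub0mx.
  by rewrite scale1r (sumsmx_sup i) ?genmxE.
apply/sumsmx_subP => i iS; rewrite genmxE.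
by have := row_sub i (coordmx S); rewrite row_diag_mx mxE iS scale1r.
Qed.

Lemma mxrank_coordmx S : \rank (coordmx S) = #|S|.
Proof.
have /mxdirectP sum_rank : mxdirect (\sum_(i in S) <<delta_mx 0 i : 'rV[F]_n>>).
  exact: mxdirect_delta.
rewrite coordmx_sum_delta sum_rank /=.
by rewrite -sum1_card; apply: eq_bigr => i _; rewrite mxrank_gen mxrank_delta.
Qed.

Lemma mxrank_cap_coordmxD1 m (A : 'M[F]_(m, n)) S i :
  (\rank (A :&: coordmx S) <= (\rank (A :&: coordmx (S :\ i))).+1)%N.
Proof.
set X := (A :&: coordmx S)%MS.
have := mxrank_sum_cap X (coordmx (S :\ i)).
have : (\rank (X + coordmx (S :\ i)) <= #|S|)%N.
  by rewrite -mxrank_coordmx mxrankS // addsmx_sub capmxSr coordmxS ?subsetDl.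
have : (\rank (X :&: coordmx (S :\ i)) <= \rank (A :&: coordmx (S :\ i)))%N.
  by rewrite mxrankS // capmxS ?capmxSl.
have := cardsD1 i S; rewrite mxrank_coordmx.
case: (i \in S) => /=; lia.
Qed.

Lemma exists_submx_rank m (A : 'M[F]_(m, n)) r :
  (r <= \rank A)%N -> exists2 D : 'M[F]_n, (D <= A)%MS & \rank D = r.
Proof.
move=> rA; exists ((pid_mx r : 'M_(n, \rank A)) *m row_base A).
  by rewrite -(eq_row_base A) submxMl.
rewrite mxrankMfree ?row_base_free // rank_pid_mx //.
exact: leq_trans rA (rank_leq_col A).
Qed.

Lemma mxrank_ker_tr_cap_coordmx (C : 'M[F]_n) S :
  (\rank (kermx C^T :&: coordmx (~: S)) + \rank C
    = #|~: S| + \rank (C :&: coordmx S))%N.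
Proof.
set K := kermx (row_mx C^T (coordmx S)).
have subK m (A : 'M[F]_(m, n)) :
    (A <= kermx C^T :&: coordmx (~: S))%MS = (A <= K)%MS.
  by rewrite sub_capmx !sub_kermx mul_mx_row row_mx_eq0 sub_coordmxC.
have -> : \rank (kermx C^T :&: coordmx (~: S)) = \rank K.
  by apply: eqmx_rank; rewrite subK -subK !submx_refl.
have rank_rowC : \rank (row_mx C^T (coordmx S)) = \rank (C + coordmx S)%MS.
  by rewrite -mxrank_tr tr_row_mx trmxK tr_diag_mx addsmxE.
have := mxrank_sum_cap C (coordmx S).
have := rank_leq_row (row_mx C^T (coordmx S)).
have := cardsC S; rewrite mxrank_ker rank_rowC mxrank_coordmx card_ord.
lia.
Qed.

End CoordinateSubspaces.

Lemma exists_maximal (T : finType) (le : rel T) (I : {set T}) :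
  reflexive le -> antisymmetric le -> transitive le -> I != set0 ->
  exists2 i, i \in I & forall j, j \in I -> le i j -> j = i.
Proof.
move=> lerefl leanti letrans /set0Pn[i0 i0I].
have [i iI imax] :=
  @arg_maxnP _ i0 (mem I) (fun i => #|[set j | le j i]|) i0I.
exists i => // j jI ij; apply: leanti; rewrite ij andbT.
apply: contraTT (imax j jI) => Nji; rewrite -ltnNge; apply: proper_card.
apply/properP; split; last by exists j; rewrite !inE ?lerefl.
by apply/subsetP => x; rewrite !inE => xi; apply: letrans xi ij.
Qed.

Definition downset n (le : rel 'I_n) (I : {set 'I_n}) :=
  forall i j, le i j -> j \in I -> i \in I.

Section Downsets.
Variables (n : nat) (le : rel 'I_n).
Implicit Types I J : {set 'I_n}.

Lemma downsetC_dual I : downset le I -> downset (dual_rel le) (~: I).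
Proof. by move=> dI i j ji; rewrite !inE; apply: contra; apply: dI. Qed.

Lemma downsetD1 I i :
  downset le I -> (forall j, j \in I -> le i j -> j = i) -> downset le (I :\ i).
Proof.
move=> dI imax a b ab; rewrite !inE => /andP[bi bI]; rewrite (dI a b) // andbT.
by apply: contraNneq bi => ai; rewrite (imax b bI) -?ai.
Qed.

Lemma ideal_subset I J : downset le I -> J \subset I -> ideal le J \subset I.
Proof.
move=> dI /subsetP JI; apply/subsetP => i.
rewrite inE => /existsP[j /andP[jJ ij]].
exact: dI ij (JI j jJ).
Qed.

Lemma subset_ideal J : reflexive le -> J \subset ideal le J.
Proof.
move=> lerefl; apply/subsetP => j jJ; rewrite inE.
by apply/existsP; exists j; rewrite jJ lerefl.
Qed.

Lemma ideal_downset J : transitive le -> downset le (ideal le J).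
Proof.
move=> letrans i j ij; rewrite !inE => /existsP[x /andP[xJ jx]].
by apply/existsP; exists x; rewrite xJ (letrans _ _ _ ij jx).
Qed.

End Downsets.

Lemma dual_poset n (le : rel 'I_n) : is_poset le -> is_poset (dual_rel le).
Proof.
case=> lerefl leanti letrans; split=> // [x y | y x z xy yz].
  by rewrite andbC; apply: leanti.
exact: letrans yz xy.
Qed.

Lemma supp_subset_coordmx (F : finFieldType) n (D : 'M[F]_n) (S : {set 'I_n}) :
  (supp D \subset S) = (D <= coordmx F S)%MS.
Proof.
apply/subsetP/idP => [DS | DS j].
  apply/sub_coordmxP => i j; apply: contraNeq => Dij; apply: DS.
  by rewrite inE; apply/existsP; exists (row i D); rewrite row_sub mxE.
rewrite inE => /existsP[u /andP[uD]]; apply: contraNT => jS.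
by move/sub_coordmxP: (submx_trans uD DS) => /(_ ord0 j jS) ->.
Qed.

Section GeneralizedWeights.
Variables (F : finFieldType) (n : nat) (le : rel 'I_n) (C : 'M[F]_n).
Implicit Types (I : {set 'I_n}) (r : nat).

Lemma gen_weight_le_n r : gen_weight le C r <= n.
Proof. by rewrite /gen_weight -minEnat -leEnat; apply: bigmin_le_id. Qed.

Lemma gen_weight_le_pweight D r :
  (D <= C)%MS -> \rank D = r -> gen_weight le C r <= pweight le D.
Proof.
move=> DC rD; rewrite /gen_weight -minEnat -leEnat.
by apply: bigmin_le_cond; rewrite DC rD eqxx.
Qed.

Lemma gen_weight_le_card I r :
  downset le I -> r <= \rank (C :&: coordmx F I) -> gen_weight le C r <= #|I|.
Proof.
move=> dI /exists_submx_rank[D DCI rD].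
apply: leq_trans (gen_weight_le_pweight (submx_trans DCI (capmxSl _ _)) rD) _.
apply/subset_leq_card/ideal_subset => //.
by rewrite supp_subset_coordmx (submx_trans DCI (capmxSr _ _)).
Qed.

Lemma exists_downset_gen_weight r :
  reflexive le -> transitive le -> r <= \rank C ->
  exists I, [/\ downset le I, #|I| = gen_weight le C r
              & r <= \rank (C :&: coordmx F I)].
Proof.
move=> lerefl letrans /exists_submx_rank[D0 D0C rD0].
have PD0 : (D0 <= C)%MS && (\rank D0 == r) by rewrite D0C rD0 eqxx.
have pweight_le_n (D : 'M[F]_n) : (pweight le D <= n)%O.
  by rewrite leEnat /pweight -[X in (_ <= X)%N](card_ord n) max_card.
have [D /andP[DC /eqP rD] gwD] := eq_bigmin D0
  (fun D : 'M[F]_n => (D <= C)%MS && (\rank D == r)) (pweight le) PD0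
  (fun D _ => pweight_le_n D).
exists (ideal le (supp D)); split; first exact: ideal_downset.
  by rewrite /gen_weight -minEnat gwD.
rewrite -rD mxrankS // sub_capmx DC -supp_subset_coordmx.
exact: subset_ideal.
Qed.

Lemma gen_weight_gt0 r :
  reflexive le -> transitive le -> 0 < r <= \rank C -> 0 < gen_weight le C r.
Proof.
move=> lerefl letrans /andP[r_gt0 /(exists_downset_gen_weight lerefl letrans)].
case=> I [_ <- rI]; rewrite (leq_trans r_gt0) // (leq_trans rI) //.
by rewrite -(mxrank_coordmx F I) mxrankS ?capmxSr.
Qed.

End GeneralizedWeights.

Section Monotonicity.
Variables (F : finFieldType) (n : nat) (le : rel 'I_n) (C : 'M[F]_n).
Hypotheses (lerefl : reflexive le) (leanti : antisymmetric le)
  (letrans : transitive le).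

Lemma gen_weight_ltS r :
  r < \rank C -> gen_weight le C r < gen_weight le C r.+1.
Proof.
move=> /(exists_downset_gen_weight lerefl letrans)[I [dI <- rI]].
have /(exists_maximal lerefl leanti letrans)[i iI imax] : I != set0.
  apply: contraTneq rI => ->; rewrite -ltnNge ltnS.
  by rewrite (leq_trans (mxrankS (capmxSr _ _))) // mxrank_coordmx cards0.
have rID1 : r <= \rank (C :&: coordmx F (I :\ i)).
  by rewrite -ltnS (leq_trans rI) ?mxrank_cap_coordmxD1.
rewrite (cardsD1 i I) iI add1n ltnS.
exact: gen_weight_le_card (downsetD1 dI imax) rID1.
Qed.

Lemma gen_weight_inj :
  {in [pred r | r <= \rank C] &, injective (gen_weight le C)}.
Proof.
apply: incn_inj_in; apply: leq_mono_in.
apply: homo_ltn_in => [y x z | i j _ jC k /andP[_ kj] | r _].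
- exact: ltn_trans.
- by rewrite inE (leq_trans (ltnW kj)).
- by rewrite inE; apply: gen_weight_ltS.
Qed.

End Monotonicity.

Lemma gen_weight_add_dual_neq (F : finFieldType) n (le : rel 'I_n)
    (C : 'M[F]_n) r s :
  reflexive le -> transitive le ->
  r <= \rank C -> s <= \rank (dual_code C) ->
  gen_weight le C r + gen_weight (dual_rel le) (dual_code C) s <> n.+1.
Proof.
move=> lerefl letrans rC sC' sum_eq.
have lerefl' : reflexive (dual_rel le) := lerefl.
have letrans' : transitive (dual_rel le) :=
  fun _ _ _ xy yz => letrans _ _ _ yz xy.
have [I [dI cardI rI]] := exists_downset_gen_weight lerefl letrans rC.
have [J [dJ cardJ sJ]] := exists_downset_gen_weight lerefl' letrans' sC'.
have cardIC := cardsC I; have cardJC := cardsC J.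
rewrite card_ord in cardIC cardJC.
have rJC : \rank (C :&: coordmx F (~: J)) < r.
  rewrite ltnNge; apply/negP.
  by move=> /(gen_weight_le_card (downsetC_dual dJ : downset le (~: J))); lia.
have sIC : \rank (dual_code C :&: coordmx F (~: I)) < s.
  rewrite ltnNge; apply/negP.
  by move=> /(gen_weight_le_card (downsetC_dual dI)); lia.
have := mxrank_ker_tr_cap_coordmx C I.
have := mxrank_ker_tr_cap_coordmx C (~: J); rewrite setCK.
rewrite -!/(dual_code C); lia.
Qed.

Lemma interval_cover_of_images n k (f g : nat -> nat) :
  k <= n ->
  {in [pred r | 1 <= r <= k] &, injective f} ->
  {in [pred s | 1 <= s <= n - k] &, injective g} ->
  (forall r, 1 <= r <= k -> 1 <= f r <= n) ->
  (forall s, 1 <= s <= n - k -> 1 <= g s <= n) ->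
  (forall r s, 1 <= r <= k -> 1 <= s <= n - k -> f r <> g s) ->
  forall m, 1 <= m <= n ->
  (exists2 r, 1 <= r <= k & m = f r) \/ (exists2 s, 1 <= s <= n - k & m = g s).
Proof.
move=> kn f_inj g_inj f_range g_range fg_neq m m_range.
set SA := map f (iota 1 k); set SB := map g (iota 1 (n - k)).
have uniq_SA : uniq SA.
  rewrite map_inj_in_uniq ?iota_uniq //; apply: sub_in2 f_inj => r.
  by rewrite mem_iota inE add1n ltnS.
have uniq_SB : uniq SB.
  rewrite map_inj_in_uniq ?iota_uniq //; apply: sub_in2 g_inj => s.
  by rewrite mem_iota inE add1n ltnS.
have uniq_SAB : uniq (SA ++ SB).
  rewrite cat_uniq uniq_SA uniq_SB andbT; apply/hasPn => _ /mapP[s + ->].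
  rewrite mem_iota add1n ltnS => s_range; apply/mapP => -[r].
  by rewrite mem_iota add1n ltnS => r_range /esym; apply: fg_neq.
have sub_SAB : {subset SA ++ SB <= iota 1 n}.
  move=> x; rewrite mem_cat mem_iota add1n ltnS.
  case/orP => /mapP[y + ->]; rewrite mem_iota add1n ltnS; first exact: f_range.
  exact: g_range.
have [|_ eq_SAB] := uniq_min_size uniq_SAB sub_SAB.
  by rewrite size_cat !size_map !size_iota subnKC.
have : m \in SA ++ SB by rewrite eq_SAB mem_iota add1n ltnS.
rewrite mem_cat => /orP[] /mapP[x]; rewrite mem_iota add1n ltnS => x_range ->.
  by left; exists x.
by right; exists x.
Qed.

Lemma interval_partition_of_images n k (w w' : nat -> nat) :
  k <= n ->
  {in [pred r | 1 <= r <= k] &, injective w} ->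
  {in [pred s | 1 <= s <= n - k] &, injective w'} ->
  (forall r, 1 <= r <= k -> 1 <= w r <= n) ->
  (forall s, 1 <= s <= n - k -> 1 <= w' s <= n) ->
  (forall r s, 1 <= r <= k -> 1 <= s <= n - k -> w r + w' s <> n.+1) ->
  let A := fun m => exists2 r, 1 <= r <= k & m = w r in
  let B := fun m => exists2 s, 1 <= s <= n - k & m = n + 1 - w' s in
  (forall m, ~ (A m /\ B m)) /\ (forall m, 1 <= m <= n <-> A m \/ B m).
Proof.
move=> kn w_inj w'_inj w_range w'_range w_add_w' A B.
have w'_refl_range s : 1 <= s <= n - k -> 1 <= n + 1 - w' s <= n.
  by move/w'_range; lia.
have w'_refl_inj :
    {in [pred s | 1 <= s <= n - k] &, injective (fun s => n + 1 - w' s)}.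
  move=> s1 s2 s1_range s2_range /= eq_w'; apply: w'_inj => //.
  by have := w'_range s1 s1_range; have := w'_range s2 s2_range; lia.
have w_neq r s : 1 <= r <= k -> 1 <= s <= n - k -> w r <> n + 1 - w' s.
  move=> r_range s_range; have := w_add_w' r s r_range s_range.
  by have := w'_range s s_range; lia.
split=> [m [[r r_range ->] [s s_range]] | m]; first exact: w_neq.
split=> [m_range | [[r r_range ->] | [s s_range ->]]].
- exact: interval_cover_of_images kn w_inj w'_refl_inj w_range w'_refl_range
    w_neq m m_range.
- exact: w_range.
- exact: w'_refl_range.
Qed.

Unset Implicit Arguments.

Theorem theorem3 (F : finFieldType) (n k : nat) (C : 'M[F]_n)
  (le : rel 'I_n) :
  \rank C = k ->
  is_poset le ->
  let A := fun m : nat => exists2 r : nat, (1 <= r <= k)%N & m = gen_weight le C r in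
  let B := fun m : nat => exists2 s : nat, (1 <= s <= n - k)%N &
             m = (n + 1 - gen_weight (dual_rel le) (dual_code C) s)%N in
  (forall m : nat, ~ (A m /\ B m)) /\
  (forall m : nat, (1 <= m <= n)%N <-> (A m \/ B m)).
Proof.
move=> rkC le_poset; have [lerefl leanti letrans] := le_poset.
have [lerefl' leanti' letrans'] := dual_poset le_poset.
have rkC' : \rank (dual_code C) = n - k by rewrite mxrank_ker mxrank_tr rkC.
apply: interval_partition_of_images.
- by rewrite -rkC rank_leq_col.
- apply: sub_in2 (gen_weight_inj lerefl leanti letrans) => r.
  by rewrite !inE rkC => /andP[].
- apply: sub_in2 (gen_weight_inj lerefl' leanti' letrans') => s.
  by rewrite !inE rkC' => /andP[].
- by move=> r r_range; rewrite gen_weight_gt0 ?gen_weight_le_n ?rkC.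
- by move=> s s_range; rewrite gen_weight_gt0 ?gen_weight_le_n ?rkC'.
- move=> r s /andP[_ rk] /andP[_ sk].
  by apply: gen_weight_add_dual_neq; rewrite ?rkC ?rkC'.
Qed.
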